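(* Let $B>0$ and let $\mu$ be a finite Borel measure on $[-B,B]^d$ with uncountable support $\operatorname{supp}\mu$. For $x^*,v\in\mathbb{R}^d$ with $v\ne0$ define $H_\pm(x^*,v)=x^*+H_\pm(v)$, where $H_+(v)=\{x\in\mathbb{R}^d:\langle x,v\rangle>0\}$ and $H_-(v)=\{x\in\mathbb{R}^d:\langle x,v\rangle<0\}$. Then there exist $x^*\in[-B,B]^d$ and $v\in S^{d-1}$ such that the following holds: if $f:[-B,B]^d\to\mathbb{R}$ satisfies $f(x)=c$ for $x\in H_+(x^*,v)$ and $f(x)=c'$ for $x\in H_-(x^*,v)$ (restricted to $[-B,B]^d$) with constants $c\ne c'$, then there is no continuous $g:[-B,B]^d\to\mathbb{R}$ with $f=g$ $\mu$-almost everywhere.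
   Context: $S^{d-1}$ denotes the Euclidean unit sphere in $\mathbb{R}^d$ and $\langle\cdot,\cdot\rangle$ the Euclidean inner product. *)

From HB Require Import structures.
From mathcomp Require Import all_boot all_order all_algebra.
From mathcomp Require Import all_classical all_reals all_analysis.
Set Implicit Arguments. Unset Strict Implicit. Unset Printing Implicit Defensive.
Import Order.TTheory GRing.Theory Num.Theory.
Import numFieldTopology.Exports numFieldNormedType.Exports.
Local Open Scope classical_set_scope.
Local Open Scope ring_scope.

Definition borelRd (R : realType) (d : nat) : measurableType _ :=
  g_sigma_algebraType (@open ('rV[R]_d)).

Definition dotv (R : realType) (d : nat) (x y : 'rV[R]_d) : R :=
  \sum_(i < d) x 0 i * y 0 i.

Definition cube (R : realType) (d : nat) (B : R) : set 'rV[R]_d :=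
  [set x | forall i : 'I_d, - B <= x 0 i <= B].

Definition sphere (R : realType) (d : nat) : set 'rV[R]_d :=
  [set v | dotv v v = 1].

Definition Hplus (R : realType) (d : nat) (xs v : 'rV[R]_d) : set 'rV[R]_d :=
  [set x | 0 < dotv (x - xs) v].
Definition Hminus (R : realType) (d : nat) (xs v : 'rV[R]_d) : set 'rV[R]_d :=
  [set x | dotv (x - xs) v < 0].

Definition msupp (R : realType) (d : nat)
  (mu : {measure set (borelRd R d) -> \bar R}) : set 'rV[R]_d :=
  [set x | forall U : set 'rV[R]_d, open U -> U x -> (0 < mu U)%E].

(* Let S be the support of mu; it lies in the cube. Call x in S two-sided in
   direction i if every ball around x contains points of S with larger and
   with smaller i-th coordinate. If no point of S were two-sided in any
   direction, every x in S would have, for each i, a box with rational corners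
   around x in which S stays on one side of the hyperplane z_i = x_i; these
   boxes and sides determine x, so S would inject into a countable type.
   So take xs two-sided in some direction i and v = e_i. On each side of the
   hyperplane, the open sets near xs meet S, hence have positive measure and
   contain points where f = g; thus g takes the value c and the value c'
   arbitrarily close to xs and cannot be continuous there. *)

From HB Require Import structures.
From mathcomp Require Import all_boot all_order all_algebra.
From mathcomp Require Import all_classical all_reals all_analysis.
From mathcomp Require Import lra.
Import Order.TTheory GRing.Theory Num.Theory.
Import numFieldTopology.Exports numFieldNormedType.Exports.
Local Open Scope classical_set_scope.
Local Open Scope ring_scope.

Section RowVectors.
Context {R : realType} {d : nat}.
Implicit Types (x y xs : 'rV[R]_d) (i : 'I_d).

Lemma ball_rowP x e y : ball x e y <-> 0 < e /\ forall j, `|x 0 j - y 0 j| < e.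
Proof.
rewrite /ball /= /mx_ball; split => -[e0 H]; split => //.
  by move=> j; exact: H.
by move=> a j; rewrite (ord1 a); exact: H.
Qed.

Lemma continuous_row_coord i : continuous (fun z : 'rV[R]_d => z 0 i).
Proof. by move=> z; exact: coord_continuous. Qed.

Lemma open_coord_gt (a : R) i : open [set z : 'rV[R]_d | a < z 0 i].
Proof. exact: (continuousP _).1 (continuous_row_coord i) _ (@open_gt _ a). Qed.

Lemma open_coord_lt (a : R) i : open [set z : 'rV[R]_d | z 0 i < a].
Proof. exact: (continuousP _).1 (continuous_row_coord i) _ (@open_lt _ a). Qed.

Lemma closed_cube (B : R) : closed (cube B : set 'rV[R]_d).
Proof.
have -> : cube B = \bigcap_(i in setT) (fun z : 'rV[R]_d => z 0 i) @^-1` `[- B, B].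
  by apply/seteqP; split => [x cx i _|x cx i]; [rewrite /= in_itv; exact: cx|
    have := cx i I; rewrite /= in_itv].
apply: closed_bigI => i _.
exact: (continuous_closedP _).1 (continuous_row_coord i) _ (@itv_closed _ _ (- B) B).
Qed.

Lemma dotv_delta x i : dotv x (delta_mx 0 i) = x 0 i.
Proof.
rewrite /dotv (bigD1 i) //= big1 => [|j ji]; first by rewrite mxE !eqxx mulr1 addr0.
by rewrite mxE (negbTE ji) andbF mulr0.
Qed.

Lemma Hplus_deltaE xs i : Hplus xs (delta_mx 0 i) = [set z | xs 0 i < z 0 i].
Proof. by apply/seteqP; split => z; rewrite /Hplus /= dotv_delta !mxE subr_gt0. Qed.

Lemma Hminus_deltaE xs i : Hminus xs (delta_mx 0 i) = [set z | z 0 i < xs 0 i].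
Proof. by apply/seteqP; split => z; rewrite /Hminus /= dotv_delta !mxE subr_lt0. Qed.

Lemma sphere_delta i : sphere (delta_mx 0 i : 'rV[R]_d).
Proof. by rewrite /sphere /= dotv_delta mxE !eqxx. Qed.

End RowVectors.

Section TwoSidedLimitPoints.
Context {R : realType} {d : nat}.
Implicit Types (S : set 'rV[R]_d) (x y : 'rV[R]_d) (i : 'I_d).

Definition two_sided_limit S i x :=
  forall e, 0 < e ->
    (S `&` ball x e `&` [set y | x 0 i < y 0 i]) !=set0 /\
    (S `&` ball x e `&` [set y | y 0 i < x 0 i]) !=set0.

Definition rat_box (q : {ffun 'I_d -> rat * rat}) : set 'rV[R]_d :=
  [set y | forall j, ratr (q j).1 < y 0 j < ratr (q j).2].

Definition one_sided_box S i x (t : {ffun 'I_d -> rat * rat} * bool) :=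
  rat_box t.1 x /\
  forall y, S y -> rat_box t.1 y -> if t.2 then y 0 i <= x 0 i else x 0 i <= y 0 i.

Lemma rat_box_in_ball x {e} : 0 < e -> exists q, rat_box q x /\ rat_box q `<=` ball x e.
Proof.
move=> e_gt0.
have near_rat j : exists q : rat * rat,
    x 0 j - e < ratr q.1 < x 0 j /\ x 0 j < ratr q.2 < x 0 j + e.
  have [q1] := @rat_in_itvoo R (x 0 j - e) (x 0 j) ltac:(lra).
  have [q2] := @rat_in_itvoo R (x 0 j) (x 0 j + e) ltac:(lra).
  by rewrite !in_itv /= => h2 h1; exists (q1, q2).
have [q qx] := choice near_rat.
exists [ffun j => q j]; split => [j|y yq]; rewrite ?ffunE.
  by have [/andP[_ ->] /andP[-> _]] := qx j.
apply/ball_rowP; split => // j; have := yq j; rewrite ffunE.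
have [/andP[? ?] /andP[? ?]] := qx j => /andP[? ?].
by rewrite ltr_norml; apply/andP; split; lra.
Qed.

Lemma not_two_sided_limit_box S i x :
  ~ two_sided_limit S i x -> exists t, one_sided_box S i x t.
Proof.
move=> /existsNP[e /not_implyP[e_gt0 /not_andP nS]].
have [q [qx qe]] := rat_box_in_ball x e_gt0.
case: nS => nS; [exists (q, true) | exists (q, false)]; split => // y Sy /qe xy /=.
all: by rewrite leNgt; apply/negP => yi; apply: nS; exists y.
Qed.

Lemma one_sided_box_coord {S i t x y} : S x -> S y ->
  one_sided_box S i x t -> one_sided_box S i y t -> x 0 i = y 0 i.
Proof.
move=> Sx Sy [xt xS] [yt yS]; have := xS y Sy yt; have := yS x Sx xt.
by case: t.2 => h1 h2; apply: le_anti; rewrite h1 h2.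
Qed.

Lemma uncountable_two_sided_limit {S} :
  ~ countable S -> exists i x, S x /\ two_sided_limit S i x.
Proof.
move=> S_unc; apply: contrapT => no_limit; apply: S_unc.
have box_at x : exists b : 'I_d -> {ffun 'I_d -> rat * rat} * bool,
    S x -> forall i, one_sided_box S i x (b i).
  have [Sx|nSx] := pselect (S x); last by exists (fun=> ([ffun=> (0, 0)], true)).
  have box_i i : exists t, one_sided_box S i x t.
    apply: not_two_sided_limit_box => lim; apply: no_limit; by exists i, x.
  by have [b bP] := choice box_i; exists b.
have [box boxP] := choice box_at.
apply/countable_injP; exists (fun x => pickle [ffun i => box x i]).
move=> x y; rewrite !inE => Sx Sy /(pcan_inj pickleK) /ffunP boxE.
apply/rowP => i; apply: (one_sided_box_coord Sx Sy (boxP x Sx i)).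
by have := boxE i; rewrite !ffunE => ->; exact: boxP.
Qed.

End TwoSidedLimitPoints.

Section SupportAndNullSets.
Context {R : realType} {d : nat} {mu : {measure set (borelRd R d) -> \bar R}}.

Lemma borelRd_open_measurable {U : set 'rV[R]_d} :
  open U -> measurable (U : set (borelRd R d)).
Proof. exact: sub_sigma_algebra. Qed.

Lemma msupp_ae_meets {P U : set 'rV[R]_d} {y} :
  {ae mu, forall x, P x} -> msupp mu y -> open U -> U y -> exists2 z, U z & P z.
Proof.
move=> [N [mN muN PN]] supp_y oU Uy; apply: contrapT => noP.
have UN : U `<=` N by move=> z Uz; apply: PN => Pz; apply: noP; exists z.
have mU := borelRd_open_measurable oU.
have : (mu U <= 0)%E by rewrite -muN; exact: le_measure (mem_set mU) (mem_set mN) UN.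
by rewrite leNgt supp_y.
Qed.

Lemma ae_cube {B : R} : mu (~` cube B) = 0%E -> {ae mu, forall x, cube B x}.
Proof.
move=> mu_cube; exists (~` cube B); split => //.
apply: borelRd_open_measurable; apply: closed_openC; exact: closed_cube.
Qed.

Lemma msupp_cube {B : R} : mu (~` cube B) = 0%E -> msupp mu `<=` cube B.
Proof.
move=> /ae_cube cube_ae y supp_y; apply: contrapT => y_out.
by have [] := msupp_ae_meets cube_ae supp_y (closed_openC (closed_cube B)) y_out.
Qed.

End SupportAndNullSets.

Lemma within_continuous_ball {K : numFieldType} {T : pseudoMetricType K} {A : set T}
    {g : T -> K} {x eps} :
  {within A, continuous g} -> A x -> 0 < eps ->
  exists2 e, 0 < e & forall z, A z -> ball x e z -> `|g x - g z| < eps.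
Proof.
move=> /subspace_continuousP g_cont Ax eps_gt0.
have /(_ (within_filter _ _)) := cvgr_dist_lt _ _ (g_cont x Ax) _ eps_gt0.
by rewrite /within /= => /nbhs_ballP[e /= e_gt0 ge]; exists e => // z Az /ge; apply.
Qed.

Theorem lemmaD1 (R : realType) (d : nat) (B : R) (hB : 0 < B)
  (mu : {measure set (borelRd R d) -> \bar R})
  (mu_fin : (mu setT < +oo)%E)
  (mu_cube : mu (~` cube B) = 0%E)
  (mu_unc : ~ countable (msupp mu)) :
  exists xs : 'rV[R]_d, exists v : 'rV[R]_d,
    cube B xs /\ sphere v /\
    forall (f : 'rV[R]_d -> R) (c c' : R), c != c' ->
      (forall x, cube B x -> Hplus xs v x -> f x = c) ->
      (forall x, cube B x -> Hminus xs v x -> f x = c') ->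
      ~ exists g : 'rV[R]_d -> R,
          {within cube B, continuous g} /\
          {ae mu, forall x : borelRd R d, cube B x -> f x = g x}.
Proof.
have [i [xs [supp_xs xs_lim]]] := uncountable_two_sided_limit mu_unc.
have xs_cube : cube B xs := msupp_cube mu_cube _ supp_xs.
exists xs, (delta_mx 0 i); split => //; split; first exact: sphere_delta.
rewrite Hplus_deltaE Hminus_deltaE => f c c' cc' f_plus f_minus [g [g_cont f_ae_g]].
have fg_ae : {ae mu, forall x, cube B x /\ f x = g x}.
  apply: (filterS2 (ae_filter_ringOfSetsType mu) _ (ae_cube mu_cube) f_ae_g).
  by move=> x cx /(_ cx).
have eps_gt0 : 0 < `|c - c'| / 2 by rewrite divr_gt0 // normr_gt0 subr_eq0.
have [e e_gt0 g_near] := within_continuous_ball g_cont xs_cube eps_gt0.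
have value_near (H : set 'rV[R]_d) (b : R) : open H ->
    (msupp mu `&` ball xs e `&` H) !=set0 ->
    (forall z, cube B z -> H z -> f z = b) -> `|g xs - b| < `|c - c'| / 2.
  move=> oH [y [[supp_y xy] Hy]] fH.
  have [z [xz Hz] [cz fgz]] :=
    msupp_ae_meets fg_ae supp_y (openI (ball_open xs e) oH) (conj xy Hy).
  by rewrite -(fH z cz Hz) fgz; exact: g_near.
have [lim_plus lim_minus] := xs_lim e e_gt0.
have := value_near _ c (open_coord_gt _ _) lim_plus f_plus.
have := value_near _ c' (open_coord_lt _ _) lim_minus f_minus.
have : `|c - c'| <= `|g xs - c| + `|g xs - c'|.
  by rewrite (distrC (g xs) c); exact: ler_distD.
lra.
Qed.
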